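(* Let $n\ge 2$. An identity $w=w'$ (with $w,w'\in X^*$) holds in the monoid $\mathrm{Styl}_n$ if and only if the words $w$ and $w'$ have the same set of scattered subwords of length at most $n$.
   Context: A monoid identity $w=w'$ with $w,w'$ in the free monoid $X^*$ holds in a monoid $M$ if $w\varphi=w'\varphi$ for every homomorphism $\varphi\colon X^*\to M$. The stylic monoid $\mathrm{Styl}_n$ is generated by $a_1,\dots,a_n$ subject to: $a_i^2=a_i$ ($1\le i\le n$); $a_ja_ia_k=a_ja_ka_i$ and $a_ia_ka_j=a_ka_ia_j$ for $1\le i<j<k\le n$; $a_ja_ia_i=a_ia_ja_i$ and $a_ja_ja_i=a_ja_ia_j$ for $1\le i<j\le n$. A word $x_1\cdots x_k$ with $x_1,\dots,x_k\in X$ is a scattered subword of length $k$ of $v\in X^*$ if there exist $v_0,\dots,v_k\in X^*$ with $v=v_0x_1v_1\cdots v_{k-1}x_kv_k$. *)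

From mathcomp Require Import all_boot.
Set Implicit Arguments. Unset Strict Implicit. Unset Printing Implicit Defensive.

(* The stylic monoid Styl_n is presented by generators a_1..a_n, which we
   index by 'I_n (a_i is the ordinal i-1, the order on indices is preserved). *)

Definition styl_rel (n : nat) (l r : seq 'I_n) : Prop :=
  (exists i : 'I_n, l = [:: i; i] /\ r = [:: i])
  \/ (exists i j k : 'I_n, (i < j < k)%N /\
        ((l = [:: j; i; k] /\ r = [:: j; k; i]) \/
         (l = [:: i; k; j] /\ r = [:: k; i; j])))
  \/ (exists i j : 'I_n, (i < j)%N /\
        ((l = [:: j; i; i] /\ r = [:: i; j; i]) \/
         (l = [:: j; j; i] /\ r = [:: j; i; j]))).

Inductive styl_cong (n : nat) : seq 'I_n -> seq 'I_n -> Prop :=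
| styl_step : forall u v l r, styl_rel l r -> styl_cong (u ++ l ++ v) (u ++ r ++ v)
| styl_refl : forall w, styl_cong w w
| styl_sym : forall w w', styl_cong w w' -> styl_cong w' w
| styl_trans : forall w1 w2 w3, styl_cong w1 w2 -> styl_cong w2 w3 -> styl_cong w1 w3.

(* Styl_n is the quotient of the free monoid seq 'I_n by styl_cong.  A monoid
   homomorphism phi : X^* -> Styl_n is determined by the images of the letters,
   i.e. by a representative word phi x for each letter x; the image of a word w
   is then the class of flatten (map phi w). *)
Definition holds_in_styl (n : nat) (X : Type) (w w' : seq X) : Prop :=
  forall phi : X -> seq 'I_n,
    styl_cong (flatten (map phi w)) (flatten (map phi w')).

Definition same_subwords_upto (X : eqType) (k : nat) (w w' : seq X) : Prop :=
  forall u : seq X, size u <= k -> subseq u w = subseq u w'.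

(* The generator a_(v+1) of Styl_n acts on states t : nat by sending v+1 to v
   and fixing every other state; these maps satisfy the defining relations.
   Given u of length k <= n, substituting for each letter x a product of
   generators read off from the positions of x in u turns this action on the
   state k into the greedy automaton that recognises u as a scattered subword;
   hence an identity of Styl_n preserves the scattered subwords of length <= n.

   Conversely, the column of a word w is obtained by inserting its letters one
   by one into a strictly decreasing word, each letter replacing the largest
   entry not exceeding it (or being appended).  By a Greene-type argument the
   l-th entry of the column is the largest x such that w has a strictly
   decreasing subword of length l+1 with letters >= x; so the column, and the
   normal form nf n w (the concatenation of the columns of the restrictions of
   w to the letters <= c, c < n), only depend on the scattered subwords of w
   of length <= n.  Every word is congruent to its normal form: if the letters
   of w are <= b, then w is congruent to its restriction to the letters < b
   followed by its column.  This goes by induction on b and then on w: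
   appending a letter a to a column Q gives a word congruent to ys followed by
   the insertion of a into Q, for some entries ys of Q below a, and the
   restriction to the letters < b absorbs these entries, since by induction on
   b appending them does not change its normal form.  Finally, every
   scattered subword of length <= n of a substituted word comes from one of
   length <= n of the original word. *)

From mathcomp Require Import all_boot zify.
From Stdlib Require Import Setoid Morphisms.
Set Implicit Arguments. Unset Strict Implicit. Unset Printing Implicit Defensive.

Local Notation "u ≡ v" := (styl_cong u v) (at level 70, no associativity).

Lemma styl_cong_ctx n (p s u v : seq 'I_n) :
  u ≡ v -> p ++ u ++ s ≡ p ++ v ++ s.
Proof.
elim=> [u0 v0 l r lr | w | w w' _ IH | w1 w2 w3 _ IH12 _ IH23].
- have assoc x : p ++ (u0 ++ x ++ v0) ++ s = (p ++ u0) ++ x ++ (v0 ++ s).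
    by rewrite !catA.
  by rewrite !assoc; apply: styl_step.
- exact: styl_refl.
- exact: styl_sym.
- exact: styl_trans IH23.
Qed.

Add Parametric Relation n : (seq 'I_n) (@styl_cong n)
  reflexivity proved by (@styl_refl n)
  symmetry proved by (@styl_sym n)
  transitivity proved by (@styl_trans n) as styl_cong_rel.

#[local] Hint Resolve styl_refl : core.

#[export] Instance cat_styl_cong n :
  Proper (@styl_cong n ==> @styl_cong n ==> @styl_cong n) (@cat 'I_n).
Proof.
move=> u v uv u' v' uv'; transitivity (v ++ u').
  exact: (styl_cong_ctx [::] u' uv).
by rewrite -(cats0 u') -(cats0 v'); apply: styl_cong_ctx.
Qed.

#[export] Instance cons_styl_cong n (a : 'I_n) :
  Proper (@styl_cong n ==> @styl_cong n) (cons a).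
Proof. by move=> u v uv; apply: (cat_styl_cong (styl_refl [:: a]) uv). Qed.

Section Relations.
Variables (n : nat) (i j k : 'I_n) (s : seq 'I_n).

Let styl_rel_cong (l r : seq 'I_n) : styl_rel l r -> l ++ s ≡ r ++ s.
Proof. exact: styl_step [::] s l r. Qed.

Lemma cong_ii : [:: i, i & s] ≡ i :: s.
Proof. by apply: (styl_rel_cong (l := [:: i; i]) (r := [:: i])); left; exists i. Qed.

Hypotheses (lt_ij : i < j) (lt_jk : j < k).

Lemma cong_jik : [:: j, i, k & s] ≡ [:: j, k, i & s].
Proof.
apply: (styl_rel_cong (l := [:: j; i; k]) (r := [:: j; k; i])); right; left.
by exists i, j, k; rewrite lt_ij lt_jk; split; [|left].
Qed.

Lemma cong_ikj : [:: i, k, j & s] ≡ [:: k, i, j & s].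
Proof.
apply: (styl_rel_cong (l := [:: i; k; j]) (r := [:: k; i; j])); right; left.
by exists i, j, k; rewrite lt_ij lt_jk; split; [|right].
Qed.

Lemma cong_jii : [:: j, i, i & s] ≡ [:: i, j, i & s].
Proof.
apply: (styl_rel_cong (l := [:: j; i; i]) (r := [:: i; j; i])); right; right.
by exists i, j; split; [|left].
Qed.

Lemma cong_jji : [:: j, j, i & s] ≡ [:: j, i, j & s].
Proof.
apply: (styl_rel_cong (l := [:: j; j; i]) (r := [:: j; i; j])); right; right.
by exists i, j; split; [|right].
Qed.

End Relations.

Lemma cong_iji n (i j : 'I_n) s : i < j -> [:: i, j, i & s] ≡ [:: j, i & s].
Proof. by move=> lt_ij; rewrite -cong_jii // cong_ii. Qed.

Lemma cong_jij n (i j : 'I_n) s : i < j -> [:: j, i, j & s] ≡ [:: j, i & s].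
Proof. by move=> lt_ij; rewrite -cong_jji // cong_ii. Qed.

Definition ord_gt n : rel 'I_n := fun x y => y < x.

Lemma ord_gt_trans n : ssrbool.transitive (@ord_gt n).
Proof. by move=> y x z xy yz; apply: ltn_trans yz xy. Qed.

Lemma sorted_ord_gt_cons n (h : 'I_n) t :
  sorted (@ord_gt n) (h :: t) = all (fun y : 'I_n => y < h) t && sorted (@ord_gt n) t.
Proof. by rewrite /= (path_sortedE (@ord_gt_trans n)). Qed.

Lemma subseq_rcons_inv (T : eqType) (d w : seq T) a : subseq d (rcons w a) ->
  subseq d w \/ exists d', d = rcons d' a /\ subseq d' w.
Proof.
rewrite -subseq_rev rev_rcons; case def_d: (rev d) => [|x s] /=.
  by left; move/(congr1 rev): def_d; rewrite revK => ->; apply: sub0seq.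
case: eqP => [eq_xa|_] sub_sw; last by left; rewrite -subseq_rev def_d.
by right; exists (rev s); rewrite -subseq_rev revK -rev_cons -eq_xa -def_d revK.
Qed.

Section DecreasingWords.
Variable n : nat.
Implicit Types (a h q x y : 'I_n) (d r s t u v w D H Q T : seq 'I_n).
Local Notation decreasing := (sorted (@ord_gt n)).

Lemma cong_lift_gt x T a r : path (@ord_gt n) x T -> x < a ->
  x :: T ++ a :: r ≡ [:: x, a & T ++ r].
Proof.
elim: T x => [|t T IH] x //= /andP[lt_tx pT] lt_xa.
by rewrite (IH t pT (ltn_trans lt_tx lt_xa)) cong_jik.
Qed.

Lemma cong_repeat_head x D r : path (@ord_gt n) x D ->
  x :: D ++ x :: r ≡ x :: D ++ r.
Proof.
case: D => [_|d D /= /andP[lt_dx pD]]; first exact: cong_ii.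
by rewrite (cong_lift_gt r pD lt_dx) cong_jij.
Qed.

Lemma cong_repeat_below x H r : decreasing H -> all (fun h => x < h) H ->
  x :: H ++ x :: r ≡ H ++ x :: r.
Proof.
elim: H => [_ _|h H IH]; first exact: cong_ii.
case: H IH => [_ _ /andP[lt_xh _]|h' H IH /= /andP[lt_h'h sH] /and3P[lt_xh lt_xh' aH]].
  exact: cong_iji.
by rewrite cong_ikj //; apply: cons_styl_cong; apply: IH => //=; rewrite lt_xh'.
Qed.

Lemma cong_lift_lt H q y r : decreasing H -> all (fun h => y < h) H -> q < y ->
  H ++ [:: q, y & r] ≡ q :: H ++ y :: r.
Proof.
elim: H => [//|h H IH]; rewrite sorted_ord_gt_cons => /andP[ltH sH] /= /andP[lt_yh aH] lt_qy.
rewrite (IH sH aH lt_qy); symmetry.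
case: H {IH sH} ltH aH => [_ _|h' H /= /andP[lt_h'h _] /andP[lt_yh' _]].
  exact: cong_ikj.
exact: cong_ikj (ltn_trans lt_qy lt_yh') lt_h'h.
Qed.

Fixpoint col_ins Q a : seq 'I_n :=
  if Q is h :: t then
    if a < h then h :: col_ins t a else if a == h then Q else a :: t
  else [:: a].

Definition column w : seq 'I_n := foldl col_ins [::] w.

Lemma column_rcons w a : column (rcons w a) = col_ins (column w) a.
Proof. by rewrite /column foldl_rcons. Qed.

Lemma mem_col_ins_sub Q a x : x \in col_ins Q a -> (x == a) || (x \in Q).
Proof.
elim: Q => [|h t IH] /=; first by rewrite inE => ->.
case: ifP => _.
  by rewrite !inE => /orP[->|/IH/orP[->|->]]; rewrite ?orbT.
case: ifP => _; first by move=> ->; rewrite orbT.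
by rewrite !inE => /orP[->|->]; rewrite ?orbT.
Qed.

Lemma col_ins_sorted Q a : decreasing Q -> decreasing (col_ins Q a).
Proof.
elim: Q => [//|h t IH]; rewrite sorted_ord_gt_cons => /andP[ltQ sQ] /=.
case: ifPn => lt_ah.
  rewrite sorted_ord_gt_cons IH // andbT; apply/allP => x /mem_col_ins_sub.
  by case/orP=> [/eqP->//|/(allP ltQ)].
case: ifPn => ne_ah; rewrite sorted_ord_gt_cons ?ltQ ?sQ // andbT.
by apply/allP => x /(allP ltQ) lt_xh; rewrite -leqNgt in lt_ah; apply: leq_trans lt_xh lt_ah.
Qed.

Lemma column_sorted w : decreasing (column w).
Proof. by elim/last_ind: w => [//|w a IH]; rewrite column_rcons col_ins_sorted. Qed.

Lemma mem_col_ins Q a x : decreasing Q ->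
  (x \in col_ins Q a) =
  (x == a) || (x \in Q) && ((a < x) || has (fun y => (x < y) && (y <= a)) Q).
Proof.
elim: Q => [|h t IH]; first by rewrite /= inE orbF.
rewrite sorted_ord_gt_cons => /andP[ltQ sQ].
have lt_h x' : x' \in t -> x' < h by move/(allP ltQ).
rewrite /=; case: ifPn => lt_ah.
  rewrite inE (IH sQ) inE (leqNgt h a) lt_ah andbF /=.
  by case: (x =P h) => [->|] //=; rewrite lt_ah !orbT.
case: ifPn => [/eqP->|ne_ah].
  rewrite !inE leqnn; case: (x =P h) => [->|_] //=.
  by case xt: (x \in t); rewrite //= lt_h ?orbT.
rewrite -leqNgt in lt_ah; rewrite !inE; case: (x =P a) => [//|ne_xa] /=.
case: (x =P h) => [->|ne_xh] /=.
  have -> : (h \in t) = false by apply/negP => /lt_h; rewrite ltnn.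
  rewrite ltnn ltnNge lt_ah /=; apply/esym/hasPn => y /lt_h lt_yh.
  by rewrite ltnNge (ltnW lt_yh).
by case xt: (x \in t); rewrite //= lt_h // lt_ah !orbT.
Qed.

Lemma col_ins_id Q a : decreasing Q -> a \in Q -> col_ins Q a = Q.
Proof.
elim: Q => [//|h t IH]; rewrite sorted_ord_gt_cons inE => /andP[ltQ sQ] /=.
case: ifPn => [lt_ah /orP[/eqP eq_ah|aQ]|nlt_ah]; first by rewrite eq_ah ltnn in lt_ah.
  by rewrite IH.
by case: ifPn => // _ /(allP ltQ) lt_ah; rewrite lt_ah in nlt_ah.
Qed.

Lemma col_ins_cat H R a : all (fun h => a < h) H -> col_ins (H ++ R) a = H ++ col_ins R a.
Proof. by elim: H => [|h H IH] //= /andP[-> /IH->]. Qed.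

Lemma col_ins_cases Q a :
  all (fun h => a < h) Q \/
  exists H x T, [/\ Q = H ++ x :: T, all (fun h => a < h) H & x <= a].
Proof.
elim: Q => [|h t IH]; first by left.
have [lt_ah|le_ha] := ltnP a h; last by right; exists [::], h, t.
case: IH => [lt_at|[H [x [T [-> aH le_xa]]]]]; first by left; rewrite /= lt_ah.
by right; exists (h :: H), x, T; rewrite /= lt_ah aH.
Qed.

Lemma mem_column_filter w (c : nat) x : x \in column w -> x <= c ->
  x \in column [seq y : 'I_n <- w | y <= c].
Proof.
elim/last_ind: w x => [//|w a IH] x.
rewrite filter_rcons column_rcons mem_col_ins ?column_sorted //.
case: ifPn => le_ac; last first.
  by case/orP=> [/eqP-> le_ac'|/andP[/IH xQ _]//]; rewrite le_ac' in le_ac.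
rewrite column_rcons mem_col_ins ?column_sorted //.
case/orP=> [->//|/andP[xQ /orP[lt_ax|/hasP[y yQ /andP[lt_xy le_ya]]]] le_xc].
  by rewrite (IH _ xQ le_xc) lt_ax orbT.
rewrite (IH _ xQ le_xc) /=; apply/orP; right; apply/orP; right.
by apply/hasP; exists y; rewrite ?lt_xy ?le_ya ?(IH _ yQ (leq_trans le_ya le_ac)).
Qed.

Lemma cong_cons_col_ins Q a : decreasing Q -> a :: col_ins Q a ≡ col_ins Q a.
Proof.
move=> sQ; case: (col_ins_cases Q a) => [ltQ|[H [x [T [eqQ ltH le_xa]]]]].
  rewrite -[Q]cats0 col_ins_cat //; exact: cong_repeat_below.
have sH : decreasing H by move: sQ; rewrite eqQ => /cat_sorted2[].
rewrite eqQ col_ins_cat //= ltnNge le_xa /=.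
by case: eqP => [<-|_]; apply: cong_repeat_below.
Qed.

Lemma cong_rcons_col_ins Q a : decreasing Q ->
  exists2 ys, all (fun y => (y \in Q) && (y < a)) ys & Q ++ [:: a] ≡ ys ++ col_ins Q a.
Proof.
move=> sQ; case: (col_ins_cases Q a) => [ltQ|[H [x [T [eqQ ltH le_xa]]]]].
  by exists [::] => //=; rewrite -[Q in col_ins Q]cats0 col_ins_cat.
have [sH pT] : decreasing H /\ path (@ord_gt n) x T.
  by move: sQ; rewrite eqQ sorted_cat_cons -cats1 => /andP[/cat_sorted2[]].
rewrite eqQ col_ins_cat //= ltnNge le_xa /= -catA /=.
case: eqP => [->|ne_ax].
  exists [::] => //=; apply: cat_styl_cong => //.
  by have := cong_repeat_head [::] pT; rewrite cats0.
have lt_xa : x < a by rewrite ltn_neqAle le_xa andbT; apply/eqP => /val_inj/esym.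
exists [:: x]; first by rewrite /= mem_cat mem_head orbT lt_xa.
have := cong_lift_gt [::] pT lt_xa; rewrite cats0 => ->.
exact: cong_lift_lt.
Qed.

Fixpoint nf k w : seq 'I_n :=
  if k is c.+1 then nf c w ++ column [seq y : 'I_n <- w | y <= c] else [::].

Lemma nf_filter_lt k (b : nat) w : k <= b -> nf k [seq y : 'I_n <- w | y < b] = nf k w.
Proof.
elim: k => [//|k IH] lt_kb /=; rewrite IH ?(ltnW lt_kb) // -filter_predI.
congr (_ ++ column _); apply: eq_filter => y /=.
by case: (leqP y k) => le_yk; rewrite ?andbT ?(leq_ltn_trans le_yk lt_kb).
Qed.

Lemma nf_rcons u x k :
  (forall c, x <= c < k -> x \in column [seq y : 'I_n <- u | y <= c]) ->
  nf k (rcons u x) = nf k u.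
Proof.
elim: k => [//|k IH] xQ /=; rewrite IH => [|c /andP[le_xc lt_ck]]; last first.
  by apply: xQ; rewrite le_xc ltnW.
rewrite filter_rcons; case: ifP => // le_xk.
by rewrite column_rcons col_ins_id ?column_sorted // xQ ?le_xk /=.
Qed.

Definition splits_at (b : nat) :=
  forall w, all (fun y => y <= b) w -> w ≡ [seq y : 'I_n <- w | y < b] ++ column w.

Lemma cong_nf_of_splits k : (forall c, c < k -> splits_at c) ->
  forall w, all (fun y => y < k) w -> w ≡ nf k w.
Proof.
elim: k => [_ [] //|k IH] split w lt_wk /=.
have le_wk : all (fun y => y <= k) w by [].
rewrite (all_filterP le_wk); transitivity ([seq y : 'I_n <- w | y < k] ++ column w).
  exact: split.
apply: cat_styl_cong => //; rewrite -(nf_filter_lt w (leqnn k)).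
apply: IH => [c lt_ck|]; first by apply/split/ltnW.
by rewrite all_filter; apply/allP => y _; apply/implyP.
Qed.

Section Absorption.
Variable b : nat.
Hypothesis split_lt : forall c, c < b -> splits_at c.

Lemma cong_rcons_column_lt w x : x \in column w -> x < b ->
  rcons [seq y : 'I_n <- w | y < b] x ≡ [seq y : 'I_n <- w | y < b].
Proof.
move=> xQ lt_xb; set u := [seq y : 'I_n <- w | y < b].
have lt_ub : all (fun y => y < b) u by rewrite all_filter; apply/allP => y _; apply/implyP.
transitivity (nf b (rcons u x)); first by apply: cong_nf_of_splits; rewrite // all_rcons lt_xb.
rewrite nf_rcons; first by symmetry; apply: cong_nf_of_splits.
move=> c /andP[le_xc lt_cb]; rewrite /u -filter_predI.
rewrite (@eq_filter _ _ (fun y => y <= c)) ?mem_column_filter // => y /=.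
by case: (leqP y c) => le_yc; rewrite ?andbT ?(leq_ltn_trans le_yc lt_cb).
Qed.

Lemma cong_cat_column_lt w ys : all (fun y => (y \in column w) && (y < b)) ys ->
  [seq y : 'I_n <- w | y < b] ++ ys ≡ [seq y : 'I_n <- w | y < b].
Proof.
elim: ys => [|y ys IH] /=; first by rewrite cats0.
by case/andP=> /andP[yQ lt_yb] /IH; rewrite -cat_rcons cong_rcons_column_lt.
Qed.

Lemma splits_at_of_lt : splits_at b.
Proof.
elim/last_ind => [//|w a IH]; rewrite all_rcons => /andP[le_ab le_wb].
have [ys ysQ cong_ys] := cong_rcons_col_ins a (column_sorted w).
have ys_lt : all (fun y => (y \in column w) && (y < b)) ys.
  apply: sub_all ysQ => y /andP[-> lt_ya]; exact: leq_trans lt_ya le_ab.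
transitivity (([seq y : 'I_n <- w | y < b] ++ column w) ++ [:: a]).
  by rewrite -cats1; apply: cat_styl_cong; first exact: IH.
rewrite -catA cong_ys catA cong_cat_column_lt // filter_rcons column_rcons.
by case: ifP => // _; rewrite cat_rcons cong_cons_col_ins ?column_sorted.
Qed.

End Absorption.

Lemma splits_at_all b : splits_at b.
Proof. by elim/ltn_ind: b => b IH; apply: splits_at_of_lt. Qed.

Lemma cong_nf w : w ≡ nf n w.
Proof.
by apply: cong_nf_of_splits => [c _|]; [apply: splits_at_all | apply/allP => y _; apply: ltn_ord].
Qed.

Definition ge_at s l (x : nat) := (l < size s) && (x <= nth 0 (map val s) l).

Lemma ge_at_cons h s l (x : nat) :
  ge_at (h :: s) l x = if l is l'.+1 then ge_at s l' x else x <= h.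
Proof. by case: l. Qed.

Lemma ge_at_bound s l (m : nat) : all (fun y => y <= m) s -> ge_at s l m.+1 = false.
Proof.
rewrite /ge_at; case: (ltnP l (size s)) => //= lt_ls.
case: s lt_ls => [//|h t] lt_ls le_sm.
by rewrite (nth_map h) // ltnNge (allP le_sm) // mem_nth.
Qed.

Lemma ge_at_col_ins Q a l (x : nat) : decreasing Q ->
  ge_at (col_ins Q a) l x =
  ge_at Q l x || (x <= a) && (if l is l'.+1 then ge_at Q l' a.+1 else true).
Proof.
elim: Q l => [|h t IH] l; first by case: l => [|l]; rewrite /ge_at /= ?andbT ?andbF.
rewrite sorted_ord_gt_cons => /andP[ltQ sQ].
have le_Qh : all (fun y => y <= h) (h :: t).
  by rewrite /= leqnn; apply: sub_all ltQ => y /ltnW.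
rewrite /=; case: ifPn => [lt_ah|nlt_ah].
  case: l => [|l]; last by rewrite !ge_at_cons IH //; case: l => [|l]; rewrite ?ge_at_cons ?lt_ah.
  rewrite !ge_at_cons andbT; case: (leqP x a) => [le_xa|_]; last by rewrite orbF.
  by rewrite orbT (leq_trans le_xa (ltnW lt_ah)).
case: ifPn => [/eqP eq_ah|ne_ah].
  subst a; case: l => [|l]; first by rewrite ge_at_cons andbT orbb.
  by rewrite ge_at_bound ?andbF ?orbF.
have lt_ha : h < a by rewrite ltn_neqAle val_eqE eq_sym ne_ah leqNgt.
rewrite !ge_at_cons; case: l => [|l].
  by rewrite andbT; case: (leqP x h) => //= le_xh; rewrite (leq_trans le_xh (ltnW lt_ha)).
rewrite ge_at_bound ?andbF ?orbF //.
by apply: sub_all le_Qh => y le_yh; apply: leq_trans le_yh (ltnW lt_ha).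
Qed.

Lemma sorted_ord_gt_rcons d a :
  decreasing (rcons d a) = decreasing d && all (fun y => a < y) d.
Proof.
by rewrite !(sorted_pairwise (@ord_gt_trans n)) -cats1 pairwise_cat allrel1r andbT andbC.
Qed.

Definition has_decr_subword w l (x : nat) :=
  exists d, [/\ size d = l.+1, decreasing d, all (fun y => x <= y) d & subseq d w].

Lemma has_decr_subword_rcons w a l (x : nat) :
  has_decr_subword (rcons w a) l x <->
  has_decr_subword w l x \/ x <= a /\ (if l is l'.+1 then has_decr_subword w l' a.+1 else True).
Proof.
split=> [[d [sz_d sd le_xd]]|].
  case/subseq_rcons_inv => [sub_dw|[d' [eq_d sub_d'w]]]; first by left; exists d.
  subst d; right; move: sd le_xd; rewrite sorted_ord_gt_rcons all_rcons => /andP[sd' lt_ad'].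
  case/andP=> le_xa _; split=> //; case: l sz_d => [//|l] /eqP; rewrite size_rcons eqSS.
  by move=> /eqP sz_d'; exists d'.
case=> [[d [sz_d sd le_xd sub_dw]]|[le_xa]].
  by exists d; split=> //; apply: subseq_trans sub_dw (subseq_rcons _ _).
case: l => [_|l [d [sz_d sd lt_ad sub_dw]]].
  by exists [:: a]; rewrite /= le_xa sub1seq mem_rcons mem_head.
exists (rcons d a); split.
- by rewrite size_rcons sz_d.
- by rewrite sorted_ord_gt_rcons sd.
- by rewrite all_rcons le_xa; apply: sub_all lt_ad => y /ltnW; apply: leq_trans le_xa.
- by rewrite -!cats1 cat_subseq.
Qed.

Lemma ge_at_column w l (x : nat) : ge_at (column w) l x <-> has_decr_subword w l x.
Proof.
elim/last_ind: w l x => [|w a IH] l x.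
  by split=> // [[d [sz_d _ _]]]; rewrite subseq0 => /eqP d0; rewrite d0 in sz_d.
rewrite column_rcons ge_at_col_ins ?column_sorted // has_decr_subword_rcons -IH.
split=> [/orP[->|/andP[-> ge_l]]|[->|[-> ge_l]]]; [by left|right|by []|apply/orP; right].
  by split=> //; case: l ge_l => // l /IH.
by case: l ge_l => // l /IH.
Qed.

Lemma eq_from_ge_at s s' : (forall l (x : nat), ge_at s l x = ge_at s' l x) -> s = s'.
Proof.
move=> eq_ge; have ge_at0 s0 l : ge_at s0 l 0 = (l < size s0) by rewrite /ge_at andbT.
have eq_sz : size s = size s'.
  have := eq_ge (size s) 0; have := eq_ge (size s') 0; rewrite !ge_at0 !ltnn.
  move=> /negbT; rewrite -ltnNge ltnS => le_ss' /esym/negbT; rewrite -ltnNge ltnS.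
  by move=> le_s's; apply/anti_leq/andP.
apply: (inj_map val_inj); apply: (@eq_from_nth _ 0); rewrite !size_map // => l lt_ls.
have := eq_ge l (nth 0 (map val s) l); have := eq_ge l (nth 0 (map val s') l).
rewrite /ge_at -eq_sz lt_ls !leqnn /= => le_s's /esym le_ss'.
by apply/eqP; rewrite eqn_leq le_s's le_ss'.
Qed.

Lemma size_decreasing d : decreasing d -> size d <= n.
Proof.
move=> sd; have ud : uniq d by apply: sorted_uniq sd; [apply: ord_gt_trans | move=> y; apply: ltnn].
by rewrite -(card_uniqP ud) -[X in _ <= X]card_ord max_card.
Qed.

Lemma has_decr_subword_same v v' l (x : nat) : same_subwords_upto n v v' ->
  has_decr_subword v l x -> has_decr_subword v' l x.
Proof.
by move=> eq_vv' [d [sz_d sd le_xd sub_dv]]; exists d; rewrite -eq_vv' ?size_decreasing.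
Qed.

Lemma column_eq v v' : same_subwords_upto n v v' -> column v = column v'.
Proof.
move=> eq_vv'; apply: eq_from_ge_at => l x; apply/idP/idP => /ge_at_column ge_l.
  by apply/ge_at_column; apply: has_decr_subword_same ge_l.
by apply/ge_at_column; apply: has_decr_subword_same ge_l => u le_un; rewrite eq_vv'.
Qed.

Lemma nf_eq k v v' : same_subwords_upto n v v' -> nf k v = nf k v'.
Proof.
move=> eq_vv'; elim: k => [//|k /= ->]; congr (_ ++ _); apply: column_eq => u le_un.
by rewrite !subseq_filter eq_vv'.
Qed.

Lemma styl_cong_of_subwords v v' : same_subwords_upto n v v' -> v ≡ v'.
Proof.
move=> eq_vv'; transitivity (nf n v); first exact: cong_nf.
by rewrite (nf_eq n eq_vv'); symmetry; apply: cong_nf.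
Qed.

End DecreasingWords.

Definition gen_act n (t : nat) (x : 'I_n) : nat := if t == x.+1 then x : nat else t.

(* Splits the innermost conditionals first, so that every condition split on
   is free of conditionals. *)
Ltac case_ifs := repeat (match goal with |- context [if ?c then _ else _] =>
  lazymatch c with context [if _ then _ else _] => fail | _ =>
    let E := fresh "E" in case E: c; move/eqP: E => E end end; simpl).

Lemma gen_act_rel n (l r : seq 'I_n) t : styl_rel l r ->
  foldl (@gen_act n) t l = foldl (@gen_act n) t r.
Proof.
case=> [[i [-> ->]]|[[i [j [k [/andP[? ?] [[-> ->]|[-> ->]]]]]]|[i [j [? [[-> ->]|[-> ->]]]]]]] /=;
by rewrite /gen_act; case_ifs; lia.
Qed.

Lemma gen_act_cong n (w w' : seq 'I_n) t : w ≡ w' ->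
  foldl (@gen_act n) t w = foldl (@gen_act n) t w'.
Proof.
move=> ww'; elim: ww' t => [u v l r lr|w0|w1 w2 _ IH|w1 w2 w3 _ IH12 _ IH23] t //.
  by rewrite !foldl_cat (gen_act_rel _ lr).
by rewrite IH12 IH23.
Qed.

Lemma foldl_gen_act_iota n (P : pred nat) m r t : m + r <= n.+1 ->
  foldl (@gen_act n.+1) t [seq inord v | v <- iota m r & P v] =
  if [&& 0 < t, m <= t.-1, t.-1 < m + r & P t.-1] then t.-1 else t.
Proof.
elim: r m t => [|r IH] m t le_mr /=.
  by case: t => [|t] //=; rewrite addn0; case: (leqP m t) => //=; rewrite ltnNge => ->.
have lt_mn : m < n.+1 by rewrite addnS in le_mr; apply: leq_ltn_trans (leq_addr _ _) le_mr.
have le_mr' : m.+1 + r <= n.+1 by rewrite addSn -addnS.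
case Pm: (P m) => /=; last first.
  rewrite IH //; case: t => [|t] //=.
  by case: (ltngtP m t) => [|//|<-]; rewrite ?Pm ?andbF // addSn addnS.
rewrite /gen_act inordK //; case: eqP => [-> | ne_tm].
  rewrite IH //= [m < m.-1]ltnNge leq_pred /= !andbF.
  by rewrite leqnn addnS ltnS leq_addr Pm.
rewrite IH //; case: t ne_tm => [|t] ne_tm //=.
have -> : (m < t) = (m <= t).
  by rewrite ltn_neqAle; case: eqP => // eq_mt; case: ne_tm; rewrite eq_mt.
by rewrite addSn addnS.
Qed.

Section GreedyMatching.
Variables (X : eqType) (u : seq X).

Definition match_step p x := if (p < size u) && (nth x u p == x) then p.+1 else p.

Definition greedy p w := foldl match_step p w.

Lemma match_step_le p x : p <= size u -> match_step p x <= size u.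
Proof. by rewrite /match_step; case: ifP => // /andP[]. Qed.

Lemma greedy_le p w : p <= size u -> greedy p w <= size u.
Proof. by elim: w p => [|x w IH] p le_pu //=; apply/IH/match_step_le. Qed.

Lemma subseq_drop_greedy p w : p <= size u -> subseq (drop p u) w = (greedy p w == size u).
Proof.
elim: w p => [|x w IH] p le_pu.
  by rewrite /= -size_eq0 size_drop subn_eq0 eqn_leq le_pu.
rewrite [greedy _ _]/= /match_step; case: (ltnP p (size u)) => [lt_pu|le_up].
  by rewrite (drop_nth x lt_pu) /=; case: eqP => _; rewrite -?(drop_nth x lt_pu) IH.
rewrite drop_oversize // sub0seq /=; suff -> : greedy p w = p by rewrite eqn_leq le_pu le_up.
by elim: w {IH} => //= y w; rewrite /match_step ltnNge le_up.
Qed.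

(* The letter x is sent to the product, in increasing order of v, of the
   generators a_(v+1) (the ordinal v) with v < k = size u and u_(k-1-v) = x.
   As a_(v+1) maps the state v+1 to v, this product maps the state k - p to
   k - p - 1 if u_p = x and fixes it otherwise. *)
Definition track n (x : X) : seq 'I_n.+1 :=
  [seq inord v | v <- iota 0 (size u) & nth x u ((size u).-1 - v) == x].

Lemma foldl_gen_act_track n x p : size u <= n.+1 -> p <= size u ->
  foldl (@gen_act n.+1) (size u - p) (track n x) = size u - match_step p x.
Proof.
move=> le_un le_pu; rewrite /track foldl_gen_act_iota // add0n /match_step.
case: (ltnP p (size u)) => [lt_pu|le_up] /=; last by move: le_up; rewrite -subn_eq0 => /eqP ->.
have lt_pred : (size u - p).-1 < size u by lia.
have sub_pred : (size u).-1 - (size u - p).-1 = p by lia.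
by rewrite subn_gt0 lt_pu lt_pred sub_pred /=; case: eqP => // _; lia.
Qed.

Lemma foldl_gen_act_flatten n p w : size u <= n.+1 -> p <= size u ->
  foldl (@gen_act n.+1) (size u - p) (flatten (map (track n) w)) = size u - greedy p w.
Proof.
move=> le_un; elim: w p => [//|x w IH] p le_pu /=.
by rewrite foldl_cat foldl_gen_act_track // IH // match_step_le.
Qed.

End GreedyMatching.

Lemma subwords_of_holds n (X : eqType) (w w' : seq X) :
  holds_in_styl n w w' -> same_subwords_upto n w w'.
Proof.
case: n => [_ u|n holds u le_un]; first by rewrite leqn0 => /nilP ->; rewrite !sub0seq.
have := gen_act_cong (size u) (holds (track u n)).
rewrite -{1 2}(subn0 (size u)) !foldl_gen_act_flatten // => eq_sub.
have eq_greedy : greedy u 0 w = greedy u 0 w'.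
  by have := greedy_le w (leq0n (size u)); have := greedy_le w' (leq0n (size u)); lia.
by rewrite -(drop0 u) !subseq_drop_greedy // eq_greedy.
Qed.

Section Substitution.
Variables (X T : eqType) (f : X -> seq T).

Lemma subseq_flatten_map u w :
  subseq u w -> subseq (flatten (map f u)) (flatten (map f w)).
Proof.
elim: w u => [|x w IH] [|y u] //=; rewrite ?sub0seq //.
case: eqP => [-> /IH|_ /IH sub_uw]; first by apply: cat_subseq (subseq_refl _).
exact: subseq_trans sub_uw (suffix_subseq _ _).
Qed.

Lemma subseq_cat_inv (d s1 s2 : seq T) : subseq d (s1 ++ s2) ->
  exists d1 d2, [/\ d = d1 ++ d2, subseq d1 s1 & subseq d2 s2].
Proof.
elim: s1 d => [|y s1 IH] d /=; first by exists [::], d.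
case: d => [|z d] /=; first by exists [::], [::]; rewrite !sub0seq.
case: eqP => [-> /IH [d1 [d2 [-> sub1 sub2]]]|_ /IH [d1 [d2 [-> sub1 sub2]]]].
  by exists (y :: d1), d2; rewrite /= eqxx.
by exists d1, d2; split=> //; apply: subseq_trans sub1 (subseq_cons _ _).
Qed.

Lemma subseq_flatten_map_inv w d : subseq d (flatten (map f w)) ->
  exists u, [/\ size u <= size d, subseq u w & subseq d (flatten (map f u))].
Proof.
elim: w d => [|x w IH] d /=; first by case: d => // _; exists [::].
case/subseq_cat_inv=> [[|z d1] [d2 [-> sub1 /IH [u [le_ud sub_uw sub2]]]]].
  by exists u; split=> //; apply: subseq_trans sub_uw (subseq_cons _ _).
exists (x :: u); split=> /=; rewrite ?eqxx //.
  by rewrite size_cat ltnS (leq_trans le_ud (leq_addl _ _)).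
exact: (@cat_subseq _ (z :: d1)).
Qed.

End Substitution.

Lemma holds_of_subwords n (X : eqType) (w w' : seq X) :
  same_subwords_upto n w w' -> holds_in_styl n w w'.
Proof.
move=> eq_ww' f; apply: styl_cong_of_subwords => d le_dn.
suff sub_image v v' : same_subwords_upto n v v' ->
    subseq d (flatten (map f v)) -> subseq d (flatten (map f v')).
  by apply/idP/idP; apply: sub_image => // u le_un; rewrite eq_ww'.
move=> eq_vv' /subseq_flatten_map_inv [u [le_ud sub_uv sub_du]].
apply: subseq_trans sub_du (subseq_flatten_map _ _).
by rewrite -eq_vv' // (leq_trans le_ud le_dn).
Qed.

(* Both directions hold for every n. *)
Theorem corollary1 (n : nat) (hn : 2 <= n) (X : eqType) (w w' : seq X) :
  holds_in_styl n w w' <-> same_subwords_upto n w w'.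
Proof. by split; [apply: subwords_of_holds | apply: holds_of_subwords]. Qed.
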